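(* Let $\omega_1,\dots,\omega_m$ be holomorphic $2$-forms on $\mathbb{H}^2$, continuous at the cusps $\mathbb{P}^1(K)$, and let $g:[0,2]^2\to\mathbb{H}^2\cup\mathbb{P}^1(K)$ be a membrane. Let $A\subset[0,1]^2$ be a diangle (a $2$-dimensional region homeomorphic to a disc, bounded by two arcs) with vertices $(0,0)$ and $(1,1)$, and let $B\subset[1,2]^2$ be a diangle with vertices $(1,1)$ and $(2,2)$; put $U=g(A)$, $V=g(B)$. Then (i) $\displaystyle\int_{g,U\cup V}\omega_1\cdots\omega_m=\sum_{j=0}^m\int_{g,U}\omega_1\cdots\omega_j\int_{g,V}\omega_{j+1}\cdots\omega_m$ (empty integrals being $1$); (ii) $J^a(g;A\cup B;\Omega)=J^a(g;A;\Omega)\,J^a(g;B;\Omega)$.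
   Context: $K$ is a real quadratic field, $\mathbb{H}^2=\mathbb{H}\times\mathbb{H}$ with cusps $\mathbb{P}^1(K)$. A membrane on a square $[0,L]^2$ is a continuous piecewise differentiable map into $\mathbb{H}^2\cup\mathbb{P}^1(K)$ sending each coordinate line $\{t_1=a\}$, $\{t_2=a\}$ into a finite union of holomorphic curves. For a region $A$ in the square, the (type a, ordered) iterated integral over $U=g(A)$ is \[\int_{g,U}\omega_1\cdots\omega_m=\int_{D_A}\bigwedge_{j=1}^m g^*\omega_j(t_{1,j},t_{2,j}),\] where $D_A=\{(t_{1,1},\dots,t_{1,m},t_{2,1},\dots,t_{2,m}): t_{1,1}\le\dots\le t_{1,m},\ t_{2,1}\le\dots\le t_{2,m},\ (t_{1,j},t_{2,j})\in A\text{ for }j=1,\dots,m\}$ and $g^*\omega_j(x,y)$ is the pulled-back $2$-form in coordinates $(x,y)$. With $\Omega=(\omega_1,\dots,\omega_m)$ and non-commuting formal variables $X_1,\dots,X_m$, the type a generating series is \[J^a(g;A;\Omega)=1+\sum_{k\ge1}\sum_{c:\{1,\dots,k\}\to\{1,\dots,m\}}X_{c(1)}\cdots X_{c(k)}\int_{g,g(A)}\omega_{c(1)}\cdots\omega_{c(k)},\] an element of the ring of non-commutative formal power series $\mathbb{C}\langle\langle X_1,\dots,X_m\rangle\rangle$. *)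

From HB Require Import structures.
From mathcomp Require Import all_boot all_order all_algebra.
From mathcomp Require Import all_classical all_reals all_analysis.
From mathcomp Require Import complex.
Set Implicit Arguments. Unset Strict Implicit. Unset Printing Implicit Defensive.
Import Order.TTheory GRing.Theory Num.Theory.
Import numFieldNormedType.Exports.
Local Open Scope classical_set_scope.
Local Open Scope ring_scope.

Section Defs.
Variable R : realType.
Local Notation C := R[i].

Definition leb2 := (@lebesgue_measure R \x @lebesgue_measure R)%E.

Definition cint (D : set (R * R)) (f : R * R -> C) : C :=
  Complex (Rintegral leb2 D (fun x => complex.Re (f x)))
          (Rintegral leb2 D (fun x => complex.Im (f x))).

Definition cintegrable (D : set (R * R)) (f : R * R -> C) : Prop :=
  leb2.-integrable D (fun x => (complex.Re (f x))%:E) /\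
  leb2.-integrable D (fun x => (complex.Im (f x))%:E).

Definition cle (p q : R * R) : Prop := p.1 <= q.1 /\ p.2 <= q.2.

(* A coefficient function F : R*R -> C stands for the pulled-back 2-form
   g^* omega (x,y) = F(x,y) dx /\ dy.
   The integral over D_A of  /\_j g^*omega_j(t_{1,j},t_{2,j}),  where
   D_A = { x_1 <= x_2 <= ... <= x_m componentwise, x_j = (t_{1,j},t_{2,j}) in A },
   written as the (Fubini) iterated integral over x_1, then x_2 >= x_1, ... *)
Fixpoint itint_from (A : set (R * R)) (Fs : seq (R * R -> C)) (lo : R * R) : C :=
  match Fs with
  | [::] => 1
  | F :: Fs' => cint (A `&` [set x | cle lo x]) (fun x => F x * itint_from A Fs' x)
  end.

Definition itint (A : set (R * R)) (Fs : seq (R * R -> C)) : C :=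
  match Fs with
  | [::] => 1
  | F :: Fs' => cint A (fun x => F x * itint_from A Fs' x)
  end.

(* Non-commutative formal power series in X_1..X_m (indexed by 'I_m):
   a series is its coefficient function on words. *)
Definition ncseries (m : nat) := seq 'I_m -> C.

Definition ncmul (m : nat) (P Q : ncseries m) : ncseries m :=
  fun w => \sum_(j < (size w).+1) P (take j w) * Q (drop j w).

Definition Ja (m : nat) (A : set (R * R)) (Om : 'I_m -> R * R -> C) : ncseries m :=
  fun w => itint A [seq Om i | i <- w].

Definition disc : set (R * R) := [set p | p.1 ^+ 2 + p.2 ^+ 2 <= 1].

(* A is a diangle with vertices p and q: homeomorphic image of the closed disc
   (continuous injective image of a compact set), the two boundary
   half-circles joining (-1,0) and (1,0) becoming the two bounding arcs. *)
Definition diangle (A : set (R * R)) (p q : R * R) : Prop :=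
  exists h : R * R -> R * R,
    {within disc, continuous h} /\
    (forall x y, disc x -> disc y -> h x = h y -> x = y) /\
    h @` disc = A /\ h (-1, 0) = p /\ h (1, 0) = q.

Definition square (a b : R) : set (R * R) :=
  [set x | a <= x.1 <= b /\ a <= x.2 <= b].

End Defs.

(* The iterated integral over a region is computed from the outermost form inwards, each
   integral ranging over the points of the region lying componentwise above the previous
   integration variable.  Since A lies below the common vertex p = (1,1) and B above it, for
   a lower corner lo <= p the points of A ∪ B above lo are those of A above lo together with
   all of B, while above a point of B other than p there are only points of B.  Hence the
   outermost integral splits into an integral over A, whose integrand splits recursively in
   the same way, plus the whole iterated integral over B; induction on the number of forms
   gives (i), and (ii) is (i) read coefficient by coefficient.  The vertex p is Lebesgue-null,
   and what keeps every integrand integrable is that each inner iterated integral is a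
   bounded measurable function of its lower corner (by Tonelli). *)

From HB Require Import structures.
From mathcomp Require Import all_boot all_order all_algebra.
From mathcomp Require Import all_classical all_reals all_analysis.
From mathcomp Require Import lra measurable_realfun complex.
Set Implicit Arguments. Unset Strict Implicit. Unset Printing Implicit Defensive.
Import Order.TTheory GRing.Theory Num.Theory.
Import numFieldNormedType.Exports.
Local Open Scope classical_set_scope.
Local Open Scope ring_scope.

Lemma setX_set1 (T1 T2 : Type) (x : T1) (y : T2) : [set (x, y)] = [set x] `*` [set y].
Proof. by apply/seteqP; split => [_ -> //|[x1 y1] /= [-> ->]]. Qed.

Lemma ge0_subset_Rintegral d (T : measurableType d) (R : realType) (mu : measure T R)
    (D D' : set T) (f : T -> R) :
  measurable D -> measurable D' -> D `<=` D' -> mu.-integrable D' (EFin \o f) ->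
  (forall x, D' x -> 0 <= f x) -> Rintegral mu D f <= Rintegral mu D' f.
Proof.
move=> mD mD' DD' fint f0; apply: fine_le.
- exact/(integrable_fin_num mD)/(integrableS mD' mD DD').
- exact: integrable_fin_num.
- apply: ge0_subset_integral => //.
  exact: measurable_int fint.
Qed.

Section plane_measurability.
Variable R : realType.
Local Notation T := (measurableTypeR R * measurableTypeR R)%type.

Lemma open_measurableR2 (U : set T) : open U -> measurable U.
Proof.
move=> oU.
pose box (q : (rat * rat) * (rat * rat)) : set T :=
  `]ratr q.1.1, ratr q.1.2[%classic `*` `]ratr q.2.1, ratr q.2.2[%classic.
have -> : U = \bigcup_q (if `[< box q `<=` U >] then box q else set0).
  apply/seteqP; split => [x Ux|x [q _]]; last by case: asboolP => // qU /qU.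
  have /nbhs_ballP[e e0 xeU] := open_nbhs_nbhs (conj oU Ux).
  have [a1] := @rat_in_itvoo R (x.1 - e) x.1 ltac:(by rewrite ltrBlDr ltrDl).
  have [b1] := @rat_in_itvoo R x.1 (x.1 + e) ltac:(by rewrite ltrDl).
  have [a2] := @rat_in_itvoo R (x.2 - e) x.2 ltac:(by rewrite ltrBlDr ltrDl).
  have [b2] := @rat_in_itvoo R x.2 (x.2 + e) ltac:(by rewrite ltrDl).
  rewrite !in_itv /= => /andP[? ?] /andP[? ?] /andP[? ?] /andP[? ?].
  exists ((a1, b1), (a2, b2)) => //.
  case: asboolP => [_|]; last first.
    case=> -[y1 y2] [/=]; rewrite !in_itv /= => /andP[? ?] /andP[? ?].
    by apply: xeU; split; rewrite /= -ball_normE /ball_ /= ltr_norml; apply/andP; split; lra.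
  by split; rewrite /= in_itv /=; apply/andP.
apply: countable_bigcupT_measurable => // q.
by case: asboolP => _; [apply: measurableX; exact: measurable_itv|exact: measurable0].
Qed.

Lemma compact_disc : compact (@disc R).
Proof.
have sq_cont : continuous (fun p : R * R => p.1 ^+ 2 + p.2 ^+ 2).
  move=> x; apply: cvgD; rewrite !expr2; apply: cvgM;
    [exact: cvg_fst|exact: cvg_fst|exact: cvg_snd|exact: cvg_snd].
have disc_closed : closed (@disc R).
  rewrite (_ : @disc R = (fun p : R * R => p.1 ^+ 2 + p.2 ^+ 2) @^-1` [set x | x <= 1]) //.
  by apply: preimage_closed; [move=> x _; exact: sq_cont|exact: closed_le].
apply: (subclosed_compact disc_closed).
  by apply: compact_setX; exact: (@segment_compact R (-1) 1).
move=> [x y]; rewrite /disc /= => h.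
by split; rewrite /= in_itv /=; apply/andP; split; nra.
Qed.

Lemma diangle_measurable (A : set (R * R)) p q : diangle A p q -> measurable (A : set T).
Proof.
case=> h [hcont [_ [<- _]]].
have cA : closed (h @` @disc R).
  by apply: compact_closed; [exact: norm_hausdorff|exact: continuous_compact hcont compact_disc].
rewrite -[X in measurable X]setCK; apply: measurableC; apply: open_measurableR2.
exact: closed_openC.
Qed.

Lemma set1_measurableR2 (p : T) : measurable [set p].
Proof. by case: p => x y; rewrite setX_set1; apply: measurableX; exact: measurable_set1. Qed.

Lemma square_measurable (a b : R) : measurable (square a b : set T).
Proof.
rewrite (_ : square a b = `[a, b]%classic `*` `[a, b]%classic); last first.
  by apply/seteqP; split => -[x y] /=; rewrite !in_itv.
by apply: measurableX; exact: measurable_itv.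
Qed.

Lemma cle_measurable : measurable [set z : T * T | cle z.1 z.2].
Proof.
have ler_measurable (f g : T * T -> R) : measurable_fun setT f -> measurable_fun setT g ->
    measurable [set z | f z <= g z].
  by move=> mf mg; rewrite -[X in measurable X]setTI; exact: measurable_fun_ler.
by apply: measurableI; apply: ler_measurable; apply: measurableT_comp.
Qed.

Lemma cle_upper_measurable (lo : T) : measurable [set x : T | cle lo x].
Proof.
rewrite (_ : [set x | _] = xsection [set z : T * T | cle z.1 z.2] lo).
  exact: measurable_xsection cle_measurable.
by apply/seteqP; split => x; rewrite /xsection /= inE.
Qed.

End plane_measurability.

Lemma leb2_sigma_finite (R : realType) : sigma_finite setT (@leb2 R).
Proof.
have /sigma_finiteP[F [TF ndF Foo]] := sigma_finiteT (@lebesgue_measure R).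
exists (fun n => F n `*` F n).
  rewrite -setXTT TF predeqE => -[x y]; split.
    move=> [/= [n _ Fnx] [k _ Fky]]; exists (maxn n k) => //; split.
    - by move: x Fnx; exact/subsetPset/ndF/leq_maxl.
    - by move: y Fky; exact/subsetPset/ndF/leq_maxr.
  by move=> [n _ []/= ? ?]; split; exists n.
move=> k; have [? ?] := Foo k.
split; first exact: measurableX.
by rewrite /leb2 product_measure1E// lte_mul_pinfty// ge0_fin_numE.
Qed.

(* The sigma-finiteness of a product of sigma-finite measures is only a section-local
   instance in lebesgue_integral_fubini, so it is redeclared here for [leb2]. *)
HB.instance Definition _ (R : realType) :=
  Measure.copy (@leb2 R) (@lebesgue_measure R \x @lebesgue_measure R)%E.
HB.instance Definition _ (R : realType) :=
  Measure_isSigmaFinite.Build _ _ _ (@leb2 R) (@leb2_sigma_finite R).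

Lemma leb2_set1 (R : realType) (p : R * R) : @leb2 R [set p] = 0%E.
Proof.
by case: p => x y; rewrite setX_set1 /leb2 product_measure1E //= lebesgue_measure_set1 mul0e.
Qed.

Lemma measurable_Rintegral_xsection d1 d2 (T1 : measurableType d1) (T2 : measurableType d2)
    (R : realType) (m : {sigma_finite_measure set T2 -> \bar R}) (S : set (T1 * T2))
    (f : T2 -> R) :
  measurable S -> measurable_fun setT f ->
  measurable_fun setT (fun x => Rintegral m (xsection S x) f).
Proof.
move=> mS mf.
pose k := (fun z : T1 * T2 => (f z.2)%:E) \_ S.
have mk : measurable_fun setT k.
  apply/(measurable_restrictT _ mS)/measurable_EFinP.
  exact: measurable_funS (measurableT_comp mf measurable_snd).
have -> : (fun x => Rintegral m (xsection S x) f) =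
    fun x => fine (fubini_F m k^\+ x - fubini_F m k^\- x)%E.
  apply/funext => x; rewrite /Rintegral integral_mkcond integralE /=.
  by congr (fine (_ - _)); apply: eq_integral => y _;
    rewrite ?funeposE ?funenegE /k /patch mem_xsection.
have mF (h : T1 * T2 -> \bar R) : measurable_fun setT h -> (forall z, 0 <= h z)%E ->
    measurable_fun setT (fubini_F m h).
  exact: measurable_fun_fubini_tonelli_F.
apply: (measurableT_comp (fine_measurable measurableT)).
by apply: emeasurable_funB; apply: mF;
  [exact: measurable_funepos|exact: funepos_ge0|exact: measurable_funeneg|exact: funeneg_ge0].
Qed.

Section complex_integral.
Variable R : realType.
Local Notation T := (measurableTypeR R * measurableTypeR R)%type.
Local Notation C := R[i].
Local Notation L := (@leb2 R).
Implicit Types (D : set T) (f g : T -> C).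

Lemma ReD (a b : C) : complex.Re (a + b) = complex.Re a + complex.Re b.
Proof. by case: a => ? ?; case: b. Qed.
Lemma ImD (a b : C) : complex.Im (a + b) = complex.Im a + complex.Im b.
Proof. by case: a => ? ?; case: b. Qed.
Lemma ReM (a b : C) :
  complex.Re (a * b) = complex.Re a * complex.Re b - complex.Im a * complex.Im b.
Proof. by case: a => ? ?; case: b. Qed.
Lemma ImM (a b : C) :
  complex.Im (a * b) = complex.Re a * complex.Im b + complex.Im a * complex.Re b.
Proof. by case: a => ? ?; case: b. Qed.

Lemma eq_cint D f g : (forall x, D x -> f x = g x) -> cint D f = cint D g.
Proof. by move=> fg; congr Complex; apply: eq_Rintegral => x /set_mem Dx; rewrite fg. Qed.

Lemma cintegrableS D D' f : measurable D -> measurable D' -> D' `<=` D ->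
  cintegrable D f -> cintegrable D' f.
Proof. by move=> mD mD' D'D [fRe fIm]; split; exact: integrableS D'D _. Qed.

Lemma cintegrableD D f g : measurable D ->
  cintegrable D f -> cintegrable D g -> cintegrable D (fun x => f x + g x).
Proof.
move=> mD [fRe fIm] [gRe gIm]; split.
- by apply: eq_integrable (integrableD mD fRe gRe) => // x _; rewrite /= ReD.
- by apply: eq_integrable (integrableD mD fIm gIm) => // x _; rewrite /= ImD.
Qed.

Lemma cintD D f g : measurable D -> cintegrable D f -> cintegrable D g ->
  cint D (fun x => f x + g x) = cint D f + cint D g.
Proof.
move=> mD [fRe fIm] [gRe gIm]; congr Complex.
- by rewrite -RintegralD //; apply: eq_Rintegral => x _; rewrite ReD.
- by rewrite -RintegralD //; apply: eq_Rintegral => x _; rewrite ImD.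
Qed.

Lemma cintegrable_sum D n (f : 'I_n -> T -> C) : measurable D ->
  (forall j, cintegrable D (f j)) -> cintegrable D (fun x => \sum_(j < n) f j x).
Proof.
move=> mD; elim: n f => [|n IH] f fint.
  by under eq_fun do rewrite big_ord0; split; exact: integrable0.
under eq_fun do rewrite big_ord_recr /=.
by apply: cintegrableD => //; apply: IH => j.
Qed.

Lemma cint_sum D n (f : 'I_n -> T -> C) : measurable D ->
  (forall j, cintegrable D (f j)) ->
  cint D (fun x => \sum_(j < n) f j x) = \sum_(j < n) cint D (f j).
Proof.
move=> mD; elim: n f => [|n IH] f fint.
  rewrite big_ord0 (eq_cint (g := fun=> 0)) => [|x _]; last by rewrite big_ord0.
  by rewrite /cint /= Rintegral_cst // mul0r.
under eq_cint do rewrite big_ord_recr /=.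
rewrite cintD //; last by apply: cintegrable_sum.
by rewrite big_ord_recr /= IH.
Qed.

Lemma cintMr D f (c : C) : measurable D -> cintegrable D f ->
  cint D (fun x => f x * c) = cint D f * c.
Proof.
move=> mD [fRe fIm]; case: c => a b.
have intMr (h : T -> R) r : L.-integrable D (EFin \o h) ->
    L.-integrable D (EFin \o (fun x => h x * r)).
  by move=> hint; apply: eq_integrable (integrableZr mD r hint).
congr Complex => /=.
- rewrite -!RintegralZr // -RintegralB //; try exact: intMr.
  by apply: eq_Rintegral => x _; rewrite ReM.
- rewrite -!RintegralZr // -RintegralD //; try exact: intMr.
  by apply: eq_Rintegral => x _; rewrite ImM.
Qed.

Lemma cint_setU D D' f : measurable D -> measurable D' -> D `&` D' = set0 ->
  cintegrable (D `|` D') f -> cint (D `|` D') f = cint D f + cint D' f.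
Proof.
move=> mD mD' DD' [fRe fIm].
have dj : [disjoint D & D'] by apply/disj_setPS; rewrite DD'.
by congr Complex; rewrite Rintegral_setU.
Qed.

Lemma cint_setD1 D (p : T) f :
  measurable D -> cintegrable D f -> cint (D `\ p) f = cint D f.
Proof.
move=> mD [fRe fIm]; have mp := set1_measurableR2 p.
by congr Complex; rewrite /Rintegral (negligible_integral mp mD _ (leb2_set1 p)).
Qed.

End complex_integral.

Section iterated_integral.
Variable R : realType.
Local Notation T := (measurableTypeR R * measurableTypeR R)%type.
Local Notation C := R[i].
Local Notation L := (@leb2 R).

Definition cbounded_measurable (h : T -> C) :=
  [/\ measurable_fun setT (fun x => complex.Re (h x)),
      measurable_fun setT (fun x => complex.Im (h x)) &
      exists M, forall x, `|complex.Re (h x)| <= M /\ `|complex.Im (h x)| <= M].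

Lemma cbounded_measurable_cst (c : C) : cbounded_measurable (fun=> c).
Proof.
split; [exact: measurable_cst|exact: measurable_cst|].
by exists (Num.max `|complex.Re c| `|complex.Im c|) => _; rewrite !le_max !lexx orbT.
Qed.

Lemma cintegrableM (D : set T) (f h : T -> C) : measurable D ->
  cintegrable D f -> cbounded_measurable h -> cintegrable D (fun x => f x * h x).
Proof.
move=> mD [fRe fIm] [hRe hIm [M hM]].
have bounded_by (k : T -> R) : (forall x, `|k x| <= M) -> [bounded k x | x in D].
  move=> kM; exists M; split; first exact: num_real.
  by move=> N MN x _; apply: le_trans (kM x) (ltW MN).
have hRe_bd : [bounded complex.Re (h x) | x in D] by apply: bounded_by => x; case: (hM x).
have hIm_bd : [bounded complex.Im (h x) | x in D] by apply: bounded_by => x; case: (hM x).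
have hReD := measurable_funS measurableT (subsetT D) hRe.
have hImD := measurable_funS measurableT (subsetT D) hIm.
split.
- have := integrableB mD (integrableMl mD fRe hReD hRe_bd) (integrableMl mD fIm hImD hIm_bd).
  by apply: eq_integrable => // x _; rewrite /= ReM EFinB !EFinM.
- have := integrableD mD (integrableMl mD fRe hImD hIm_bd) (integrableMl mD fIm hReD hRe_bd).
  by apply: eq_integrable => // x _; rewrite /= ImM EFinD !EFinM.
Qed.

Lemma measurable_Rintegral_upper (X : set T) (g : T -> R) :
  measurable X -> measurable_fun X g ->
  measurable_fun setT (fun lo : T => Rintegral L (X `&` [set x | cle lo x]) g).
Proof.
move=> mX mg.
pose S := [set z : T * T | cle z.1 z.2] `&` (setT `*` X).
have -> : (fun lo : T => Rintegral L (X `&` [set x | cle lo x]) g) =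
    (fun lo : T => Rintegral L (xsection S lo) (g \_ X)).
  apply/funext => lo; rewrite (_ : xsection S lo = X `&` [set x | cle lo x]).
    by apply: eq_Rintegral => x /set_mem [Xx _]; rewrite /patch mem_set.
  apply/seteqP; split => x; rewrite /xsection /= inE; first by case=> ? [].
  by case=> ? ?; split.
apply: measurable_Rintegral_xsection.
  by apply: measurableI; [exact: cle_measurable|exact: measurableX].
exact/(measurable_restrictT _ mX).
Qed.

Lemma normr_Rintegral_upper_le (X : set T) (g : T -> R) (lo : T) :
  measurable X -> L.-integrable X (EFin \o g) ->
  `|Rintegral L (X `&` [set x | cle lo x]) g| <= Rintegral L X (fun x => `|g x|).
Proof.
move=> mX gint.
have mXlo : measurable (X `&` [set x | cle lo x]).
  exact: measurableI (cle_upper_measurable lo).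
apply: le_trans (le_normr_Rintegral mXlo (integrableS mX mXlo (@subIsetl _ _ _) gint)) _.
apply: ge0_subset_Rintegral => //.
by apply: eq_integrable (integrable_abse gint) => // x _; rewrite /= abse_EFin.
Qed.

Lemma cbounded_measurable_itint_from (X : set T) (Fs : seq (T -> C)) : measurable X ->
  (forall F, F \in Fs -> cintegrable X F) -> cbounded_measurable (itint_from X Fs).
Proof.
move=> mX; elim: Fs => [|F Fs IH] Fsint; first exact: (cbounded_measurable_cst 1).
have /(cintegrableM mX (Fsint F (mem_head _ _)))[hRe hIm] :
    cbounded_measurable (itint_from X Fs).
  by apply: IH => G GFs; apply: Fsint; rewrite inE GFs orbT.
split.
- apply: (measurable_Rintegral_upper mX); apply/measurable_EFinP; exact: measurable_int hRe.
- apply: (measurable_Rintegral_upper mX); apply/measurable_EFinP; exact: measurable_int hIm.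
- exists (Num.max (Rintegral L X (fun x => `|complex.Re (F x * itint_from X Fs x)|))
                  (Rintegral L X (fun x => `|complex.Im (F x * itint_from X Fs x)|))) => lo.
  by rewrite !le_max !normr_Rintegral_upper_le ?orbT.
Qed.

End iterated_integral.

Section splitting.
Variable R : realType.
Local Notation T := (measurableTypeR R * measurableTypeR R)%type.
Local Notation C := R[i].

Lemma cle_trans (x y z : R * R) : cle x y -> cle y z -> cle x z.
Proof. by move=> [xy1 xy2] [yz1 yz2]; split; [exact: le_trans yz1|exact: le_trans yz2]. Qed.

Lemma cle_anti (x y : R * R) : cle x y -> cle y x -> x = y.
Proof.
case: x y => [x1 x2] [y1 y2] [/= xy1 xy2] [/= yx1 yx2].
by congr pair; apply/eqP; rewrite eq_le ?xy1 ?xy2.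
Qed.

Lemma itint_itint_from (X : set T) (Fs : seq (T -> C)) (lo : T) :
  X `<=` [set x | cle lo x] -> itint X Fs = itint_from X Fs lo.
Proof. by move=> Xlo; case: Fs => //= F Fs; rewrite setIidl. Qed.

Variables (p : T) (A B : set T).
Hypotheses (mA : measurable A) (mB : measurable B) (Ap : A p).
Hypotheses (A_le : forall x, A x -> cle x p) (B_ge : forall x, B x -> cle p x).

Lemma itint_from_setU_above (Fs : seq (T -> C)) (x : T) : cle p x -> x <> p ->
  itint_from (A `|` B) Fs x = itint_from B Fs x.
Proof.
elim: Fs x => [//|F Fs IH] x px xp /=.
have -> : (A `|` B) `&` [set y | cle x y] = B `&` [set y | cle x y].
  apply/seteqP; split => [y [[Ay|By] xy]|y [By xy]]; split => //; last by right.
  by case: xp; apply/esym/(cle_anti px)/(cle_trans xy)/A_le.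
apply: eq_cint => y [By xy]; congr (_ * _); apply: IH; first exact: cle_trans px xy.
by move=> yp; apply: xp; apply/esym/(cle_anti px); rewrite -yp.
Qed.

Lemma itint_from_setU (Fs : seq (T -> C)) :
  (forall F, F \in Fs -> cintegrable (A `|` B) F) -> forall lo, cle lo p ->
  itint_from (A `|` B) Fs lo =
    \sum_(j < (size Fs).+1) itint_from A (take j Fs) lo * itint B (drop j Fs).
Proof.
elim: Fs => [|F Fs IH] Fsint lo lop; first by rewrite big_ord1 /= mulr1.
have mAB : measurable (A `|` B) by exact: measurableU.
have mAlo : measurable (A `&` [set x | cle lo x]).
  by apply: measurableI => //; exact: cle_upper_measurable.
have mBp : measurable (B `\ p) by apply: measurableD => //; exact: set1_measurableR2.
have Fsint' G : G \in Fs -> cintegrable (A `|` B) G.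
  by move=> GFs; apply: Fsint; rewrite inE GFs orbT.
have Fint D : measurable D -> D `<=` A `|` B -> cintegrable D F.
  by move=> mD DAB; apply: cintegrableS mAB mD DAB (Fsint F (mem_head _ _)).
have itint_bd X Gs : measurable X -> X `<=` A `|` B -> {subset Gs <= Fs} ->
    cbounded_measurable (itint_from X Gs).
  move=> mX XAB GsFs; apply: cbounded_measurable_itint_from => // G /GsFs GFs.
  exact: cintegrableS mAB mX XAB (Fsint' G GFs).
rewrite [LHS]/=.
have -> : (A `|` B) `&` [set x | cle lo x] = (A `&` [set x | cle lo x]) `|` (B `\ p).
  apply/seteqP; split => [y [[Ay|By] loy]|y [[Ay loy]|[By yp]]].
  - by left.
  - by have [->|yp] := pselect (y = p); [left|right].
  - by split => //; left.
  - by split; [right|exact: cle_trans lop (B_ge By)].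
rewrite cint_setU //; first last.
- apply: cintegrableM; first exact: measurableU.
    by apply: Fint => [|y [[]|[]]]; [exact: measurableU|left|right].
  by apply: itint_bd => // y [].
- apply/seteqP; split => // y [[Ay _] [By]].
  by apply; apply: cle_anti (A_le Ay) (B_ge By).
rewrite big_ord_recl /= mul1r addrC; congr (_ + _).
  rewrite (eq_cint (g := fun x => F x * itint_from B Fs x)); last first.
    by move=> y [By yp]; rewrite itint_from_setU_above //; exact: B_ge.
  rewrite cint_setD1 //; apply: cintegrableM => //; first by apply: Fint => // y; right.
  by apply: itint_bd => // y; right.
rewrite (eq_cint (g := fun x => \sum_(j < (size Fs).+1)
    F x * itint_from A (take j Fs) x * itint B (drop j Fs))); last first.
  move=> y [Ay _]; rewrite IH //; last exact: A_le.
  by rewrite mulr_sumr; apply: eq_bigr => j _; rewrite mulrA.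
have FAint j :
    cintegrable (A `&` [set x | cle lo x]) (fun x => F x * itint_from A (take j Fs) x).
  apply: cintegrableM => //; first by apply: Fint => // y [Ay _]; left.
  by apply: itint_bd => //; exact: mem_take.
rewrite (cint_sum (f := fun j x => F x * itint_from A (take j Fs) x * itint B (drop j Fs))) //.
  by apply: eq_bigr => j _; rewrite cintMr.
by move=> j; apply: cintegrableM => //; exact: cbounded_measurable_cst.
Qed.

Lemma itint_setU (Fs : seq (T -> C)) (lo : T) :
  (forall F, F \in Fs -> cintegrable (A `|` B) F) -> A `|` B `<=` [set x | cle lo x] ->
  itint (A `|` B) Fs = \sum_(j < (size Fs).+1) itint A (take j Fs) * itint B (drop j Fs).
Proof.
move=> Fsint ABlo; rewrite (itint_itint_from _ ABlo) itint_from_setU //; last first.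
  by apply: ABlo; left.
have Alo : A `<=` [set x | cle lo x] by apply: subset_trans ABlo; exact: subsetUl.
by apply: eq_bigr => j _; rewrite (itint_itint_from _ Alo).
Qed.

End splitting.

Theorem mainTheorem3 (R : realType)
  (A B : set (R * R))
  (hA : diangle A (0, 0) (1, 1)) (hAsub : A `<=` square 0 1)
  (hB : diangle B (1, 1) (2, 2)) (hBsub : B `<=` square 1 2) :
  (* (i) *)
  (forall ws : seq (R * R -> R[i]),
     (forall F, F \in ws -> cintegrable (square 0 2) F) ->
     itint (A `|` B) ws =
       \sum_(j < (size ws).+1) itint A (take j ws) * itint B (drop j ws))
  /\
  (* (ii) *)
  (forall (m : nat) (Om : 'I_m -> R * R -> R[i]),
     (forall i, cintegrable (square 0 2) (Om i)) ->
     Ja (A `|` B) Om = ncmul (Ja A Om) (Ja B Om)).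
Proof.
have mA := diangle_measurable hA; have mB := diangle_measurable hB.
have A11 : A (1, 1).
  case: hA => h [_ [_ [<- [_ <-]]]]; exists (1, 0) => //.
  by rewrite /disc /= expr1n expr0n addr0.
have A_le x : A x -> cle x (1, 1) by move=> /hAsub[/andP[_ ?] /andP[_ ?]].
have B_ge x : B x -> cle (1, 1) x by move=> /hBsub[/andP[? _] /andP[? _]].
have AB_sq : A `|` B `<=` square 0 2.
  by move=> x [/hAsub|/hBsub] [/andP[? ?] /andP[? ?]]; split; apply/andP; split; lra.
have setU_split ws : (forall F, F \in ws -> cintegrable (square 0 2) F) ->
    itint (A `|` B) ws = \sum_(j < (size ws).+1) itint A (take j ws) * itint B (drop j ws).
  move=> wsint; apply: (itint_setU mA mB A11 A_le B_ge (lo := (0, 0))).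
    move=> F /wsint; apply: cintegrableS AB_sq; [exact: square_measurable|exact: measurableU].
  by move=> x /AB_sq[/andP[? _] /andP[? _]].
split => // m Om Omint; apply/funext => w.
rewrite /Ja /ncmul setU_split => [|F /mapP[i _ ->] //]; rewrite size_map.
by apply: eq_bigr => j _; rewrite map_take map_drop.
Qed.
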